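(* For all $\alpha,\beta\ge1$, \[ \Phi(\alpha,\beta)=\max\bigl\{R(AB):\ A,B \text{ are } 2\times 2 \text{ matrices with strictly positive entries},\ R(A)\le\alpha,\ R(B)\le\beta\bigr\}, \] and in particular the maximum is attained.
   Context: For a $2\times2$ matrix $A=(a_{ij})$ with strictly positive entries, $F(A)=\frac{a_{11}a_{22}}{a_{12}a_{21}}$ and the distortion is $R(A)=\max\{F(A),1/F(A)\}$. The envelope function is $\Phi(\alpha,\beta)=\left(\frac{1+\sqrt{\alpha\beta}}{\sqrt{\alpha}+\sqrt{\beta}}\right)^2$. *)

From HB Require Import structures.
From mathcomp Require Import all_boot all_order all_algebra.
From mathcomp Require Import reals.
Set Implicit Arguments. Unset Strict Implicit. Unset Printing Implicit Defensive.
Import Order.TTheory GRing.Theory Num.Theory.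
Local Open Scope ring_scope.

Definition i1 : 'I_2 := ord0.
Definition i2 : 'I_2 := ord_max.

Definition pos_mx (R : realType) (A : 'M[R]_2) : Prop :=
  forall i j : 'I_2, 0 < A i j.

Definition Fmx (R : realType) (A : 'M[R]_2) : R :=
  (A i1 i1 * A i2 i2) / (A i1 i2 * A i2 i1).

Definition distortion (R : realType) (A : 'M[R]_2) : R :=
  Num.max (Fmx A) (Fmx A)^-1.

Definition Phi (R : realType) (a b : R) : R :=
  ((1 + Num.sqrt (a * b)) / (Num.sqrt a + Num.sqrt b)) ^+ 2.

From HB Require Import structures.
From mathcomp Require Import all_boot all_order all_algebra.
From mathcomp Require Import reals.
From mathcomp Require Import ring lra.
Import Order.TTheory GRing.Theory Num.Theory.
Local Open Scope ring_scope.

(* Writing x = F(A), y = F(B) and s = a12 b21 / (a11 b11), one has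
   F(AB) = (1 + s)(1 + s x y) / ((1 + s x)(1 + s y)).  With alpha = p^2 and beta = q^2,
   the bound F(AB) <= ((1 + p q)/(p + q))^2 amounts to the nonnegativity of a polynomial
   that is affine in x and in y separately, so it is enough to check it at the four corners
   x = p^(+-2), y = q^(+-2), where it has the factor (p^2 - 1)(q^2 - 1).  Swapping the columns
   of B gives the bound for 1/F(AB), and the corner x = p^2, y = q^2, s = 1/(pq) is an
   equality case. *)

Lemma affine_ge0_between {R : realDomainType} (u v l r x : R) :
  l <= x <= r -> 0 <= u + l * v -> 0 <= u + r * v -> 0 <= u + x * v.
Proof. by case/andP=> hl hr h1 h2; case: (lerP 0 v) => hv; nra. Qed.

Lemma envelope_excess_ge0 {R : realFieldType} (p q s x y : R) :
  1 <= p -> 1 <= q -> 0 < s ->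
  (p ^+ 2)^-1 <= x <= p ^+ 2 -> (q ^+ 2)^-1 <= y <= q ^+ 2 ->
  0 <= (1 + p * q) ^+ 2 * ((1 + s * x) * (1 + s * y))
       - (p + q) ^+ 2 * ((1 + s) * (1 + s * x * y)).
Proof.
move=> p_ge1 q_ge1 s_gt0 hx hy.
pose c := (1 + p * q) ^+ 2; pose d := (p + q) ^+ 2.
pose E x y := c * ((1 + s * x) * (1 + s * y)) - d * ((1 + s) * (1 + s * x * y)).
rewrite -/(E x y).
set P := p ^+ 2 in hx *; set Q := q ^+ 2 in hy *.
have P_ge1 : 1 <= P by rewrite /P expr_ge1 //; lra.
have Q_ge1 : 1 <= Q by rewrite /Q expr_ge1 //; lra.
have PQ_ge0 : 0 <= (P - 1) * (Q - 1) by apply: mulr_ge0; lra.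
have d_ge0 : 0 <= d := sqr_ge0 _.
have p_neq0 : p != 0 by apply: lt0r_neq0; lra.
have q_neq0 : q != 0 by apply: lt0r_neq0; lra.
have corner_PQ : E P Q = (P - 1) * (Q - 1) * (p * q * s - 1) ^+ 2.
  by rewrite /E /c /d /P /Q; ring.
have corner_iPiQ : E P^-1 Q^-1 = (P - 1) * (Q - 1) * (s - p * q) ^+ 2 / (P * Q).
  by rewrite /E /c /d /P /Q; field; rewrite ?p_neq0 ?q_neq0.
have corner_iPQ : E P^-1 Q = (P - 1) * (Q - 1) * ((P + s) * (1 + s * Q) + d * s) / P.
  by rewrite /E /c /d /P /Q; field; rewrite ?p_neq0 ?q_neq0.
have corner_PiQ : E P Q^-1 = (P - 1) * (Q - 1) * ((1 + s * P) * (Q + s) + d * s) / Q.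
  by rewrite /E /c /d /P /Q; field; rewrite ?p_neq0 ?q_neq0.
have affine_in_x x' y' : E x' y' =
    (c * (1 + s * y') - d * (1 + s)) + x' * (c * s * (1 + s * y') - d * (1 + s) * s * y').
  by rewrite /E; ring.
have affine_in_y x' y' : E x' y' =
    (c * (1 + s * x') - d * (1 + s)) + y' * (c * s * (1 + s * x') - d * (1 + s) * s * x').
  by rewrite /E; ring.
have between_y x' : 0 <= E x' Q^-1 -> 0 <= E x' Q -> 0 <= E x' y.
  by rewrite !(affine_in_y x'); exact: affine_ge0_between.
(* [E] is affine in each variable, so only its values at the corners matter. *)
rewrite affine_in_x; apply: affine_ge0_between hx _ _; rewrite -affine_in_x;
  apply: between_y.
- rewrite corner_iPiQ; apply: divr_ge0; first by apply: mulr_ge0 => //; apply: sqr_ge0.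
  by apply: mulr_ge0; lra.
- rewrite corner_iPQ; apply: divr_ge0; last by lra.
  by apply: mulr_ge0 => //; apply: addr_ge0; apply: mulr_ge0; nra.
- rewrite corner_PiQ; apply: divr_ge0; last by lra.
  by apply: mulr_ge0 => //; apply: addr_ge0; apply: mulr_ge0; nra.
- by rewrite corner_PQ; apply: mulr_ge0 => //; apply: sqr_ge0.
Qed.

Definition Fprod {R : fieldType} (s x y : R) : R :=
  (1 + s) * (1 + s * x * y) / ((1 + s * x) * (1 + s * y)).

Lemma Fprod_le_envelope {R : realFieldType} (p q s x y : R) :
  1 <= p -> 1 <= q -> 0 < s ->
  (p ^+ 2)^-1 <= x <= p ^+ 2 -> (q ^+ 2)^-1 <= y <= q ^+ 2 ->
  Fprod s x y <= ((1 + p * q) / (p + q)) ^+ 2.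
Proof.
move=> p_ge1 q_ge1 s_gt0 hx hy.
have x_gt0 : 0 < x by apply: lt_le_trans (andP hx).1; rewrite invr_gt0 exprn_gt0 //; lra.
have y_gt0 : 0 < y by apply: lt_le_trans (andP hy).1; rewrite invr_gt0 exprn_gt0 //; lra.
have D_gt0 : 0 < (1 + s * x) * (1 + s * y) by apply: mulr_gt0; nra.
have d_gt0 : 0 < (p + q) ^+ 2 by rewrite exprn_gt0 //; lra.
rewrite -subr_ge0 expr_div_n /Fprod.
set D := _ * (1 + s * y); set d := (p + q) ^+ 2.
have -> : (1 + p * q) ^+ 2 / d - (1 + s) * (1 + s * x * y) / D =
    ((1 + p * q) ^+ 2 * D - d * ((1 + s) * (1 + s * x * y))) / (d * D).
  by field; rewrite !lt0r_neq0.
apply: divr_ge0; first exact: envelope_excess_ge0.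
by apply: mulr_ge0; apply: ltW.
Qed.

(* Swapping the columns of B replaces F(B) by its inverse, s by s F(B), and inverts F(AB). *)
Lemma Fprod_inv {R : realFieldType} (s x y : R) :
  0 < s -> 0 < x -> 0 < y -> (Fprod s x y)^-1 = Fprod (s * y) x y^-1.
Proof.
move=> s_gt0 x_gt0 y_gt0; rewrite /Fprod; field.
by rewrite !(lt0r_neq0, mulr_gt0, addr_gt0, ltr01).
Qed.

Lemma mulmx2E {R : pzSemiRingType} (A B : 'M[R]_2) (i j : 'I_2) :
  (A *m B) i j = A i i1 * B i1 j + A i i2 * B i2 j.
Proof.
by rewrite mxE big_ord_recr /= big_ord1 (_ : widen_ord _ _ = i1) //; apply: val_inj.
Qed.

Lemma Fmx_mulmx {R : realType} (A B : 'M[R]_2) : pos_mx A -> pos_mx B ->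
  Fmx (A *m B) = Fprod (A i1 i2 * B i2 i1 / (A i1 i1 * B i1 i1)) (Fmx A) (Fmx B).
Proof.
move=> posA posB; rewrite /Fmx /Fprod !mulmx2E; field.
by rewrite !(lt0r_neq0, mulr_gt0, addr_gt0, divr_gt0, ltr01, posA, posB).
Qed.

Lemma distortion_ge1E {R : realType} (A : 'M[R]_2) : 1 <= Fmx A -> distortion A = Fmx A.
Proof.
move=> F_ge1; rewrite /distortion max_l // (le_trans _ F_ge1) // invf_le1 //.
exact: lt_le_trans ltr01 F_ge1.
Qed.

Lemma distortion_mulmx_le {R : realType} (p q : R) (A B : 'M[R]_2) :
  1 <= p -> 1 <= q -> pos_mx A -> pos_mx B ->
  distortion A <= p ^+ 2 -> distortion B <= q ^+ 2 ->
  distortion (A *m B) <= ((1 + p * q) / (p + q)) ^+ 2.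
Proof.
move=> p_ge1 q_ge1 posA posB; rewrite /distortion !ge_max => /andP[FA iFA] /andP[FB iFB].
have P_gt0 : 0 < p ^+ 2 by rewrite exprn_gt0 //; lra.
have Q_gt0 : 0 < q ^+ 2 by rewrite exprn_gt0 //; lra.
have FA_gt0 : 0 < Fmx A by rewrite /Fmx !(divr_gt0, mulr_gt0, posA).
have FB_gt0 : 0 < Fmx B by rewrite /Fmx !(divr_gt0, mulr_gt0, posB).
have s_gt0 : 0 < A i1 i2 * B i2 i1 / (A i1 i1 * B i1 i1).
  by rewrite !(divr_gt0, mulr_gt0, posA, posB).
have lo_A : (p ^+ 2)^-1 <= Fmx A by rewrite -(invrK (Fmx A)) lef_pV2 ?posrE ?invr_gt0.
have lo_B : (q ^+ 2)^-1 <= Fmx B by rewrite -(invrK (Fmx B)) lef_pV2 ?posrE ?invr_gt0.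
rewrite Fmx_mulmx // Fprod_inv //; apply/andP; split.
  by apply: Fprod_le_envelope => //; apply/andP.
apply: Fprod_le_envelope => //; [exact: mulr_gt0 | exact/andP |].
by rewrite lef_pV2 ?posrE ?invr_gt0 // FB iFB.
Qed.

Lemma Phi_sqr {R : realType} (p q : R) :
  0 <= p -> 0 <= q -> Phi (p ^+ 2) (q ^+ 2) = ((1 + p * q) / (p + q)) ^+ 2.
Proof. by move=> p_ge0 q_ge0; rewrite /Phi -exprMn !sqrtr_sqr !ger0_norm ?mulr_ge0. Qed.

Lemma envelope_ge1 {R : realFieldType} (p q : R) :
  1 <= p -> 1 <= q -> 1 <= ((1 + p * q) / (p + q)) ^+ 2.
Proof. by move=> p_ge1 q_ge1; rewrite expr_ge1 // ?ler_pdivlMr ?mul1r; nra. Qed.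

Definition mx2 {R : Type} (a b c d : R) : 'M[R]_2 :=
  \matrix_(i, j) if i == i1 then (if j == i1 then a else b) else (if j == i1 then c else d).

Lemma mx2E {R : Type} (a b c d : R) :
  [/\ mx2 a b c d i1 i1 = a, mx2 a b c d i1 i2 = b, mx2 a b c d i2 i1 = c & mx2 a b c d i2 i2 = d].
Proof. by rewrite !mxE. Qed.

Lemma pos_mx2 {R : realType} (a b c d : R) :
  0 < a -> 0 < b -> 0 < c -> 0 < d -> pos_mx (mx2 a b c d).
Proof. by move=> *; move=> i j; rewrite mxE; do 2 case: ifP. Qed.

Lemma Fmx2 {R : realType} (a b c d : R) : Fmx (mx2 a b c d) = a * d / (b * c).
Proof. by rewrite /Fmx; case: (mx2E a b c d) => -> -> -> ->. Qed.

Lemma extremal_pair_exists {R : realType} (p q : R) : 0 < p -> 0 < q ->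
  exists A B : 'M[R]_2, [/\ pos_mx A, pos_mx B, Fmx A = p ^+ 2, Fmx B = q ^+ 2
    & Fmx (A *m B) = ((1 + p * q) / (p + q)) ^+ 2].
Proof.
move=> p_gt0 q_gt0; exists (mx2 1 1 1 (p ^+ 2)), (mx2 (p * q) 1 1 (q / p)).
have posA : pos_mx (mx2 1 1 1 (p ^+ 2)) by apply: pos_mx2; rewrite ?exprn_gt0.
have posB : pos_mx (mx2 (p * q) 1 1 (q / p)) by apply: pos_mx2; rewrite ?mulr_gt0 ?invr_gt0.
split=> //.
- by rewrite Fmx2 mul1r mulr1 divr1.
- by rewrite Fmx2; field; rewrite lt0r_neq0.
rewrite Fmx_mulmx // !Fmx2 /Fprod.
have [-> -> _ _] := mx2E 1 1 1 (p ^+ 2); have [-> _ -> _] := mx2E (p * q) 1 1 (q / p).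
field.
by rewrite !(lt0r_neq0, mulr_gt0, addr_gt0, divr_gt0, ltr01).
Qed.

Lemma ge1_is_sqr {R : rcfType} (a : R) : 1 <= a -> exists2 p : R, 1 <= p & a = p ^+ 2.
Proof.
move=> a_ge1; exists (Num.sqrt a); first by rewrite -sqrtr1 ler_sqrt // (le_trans ler01).
by rewrite sqr_sqrtr // (le_trans ler01).
Qed.

Theorem mainTheorem4 (R : realType) (alpha beta : R) :
  1 <= alpha -> 1 <= beta ->
  (forall A B : 'M[R]_2, pos_mx A -> pos_mx B ->
     distortion A <= alpha -> distortion B <= beta ->
     distortion (A *m B) <= Phi alpha beta) /\
  (exists A B : 'M[R]_2, [/\ pos_mx A, pos_mx B,
     distortion A <= alpha, distortion B <= beta &
     distortion (A *m B) = Phi alpha beta]).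
Proof.
move=> /ge1_is_sqr[p p_ge1 ->] /ge1_is_sqr[q q_ge1 ->].
have p_gt0 : 0 < p by lra.
have q_gt0 : 0 < q by lra.
rewrite Phi_sqr ?ltW //; split=> [A B|]; first exact: distortion_mulmx_le.
have [A [B [posA posB FA FB FAB]]] := extremal_pair_exists p q p_gt0 q_gt0.
have P_ge1 : 1 <= p ^+ 2 by rewrite expr_ge1 // ltW.
have Q_ge1 : 1 <= q ^+ 2 by rewrite expr_ge1 // ltW.
exists A, B; split=> //; rewrite distortion_ge1E ?FA ?FB ?FAB ?envelope_ge1 //.
Qed.
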